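(* Let $p_0>2$ be a rational number with continued fraction expansion $$p_0=\nu_1+\cfrac{1}{\nu_2+\cfrac{1}{\ddots+\cfrac{1}{\nu_\alpha}}},\qquad \alpha\ge1,\ \nu_1,\dots,\nu_\alpha\in\mathbb{Z}_{\ge1}.$$ Define $y_{-1}=0,\ y_0=1,\ z_{-1}=1,\ z_0=0$ and $y_j=y_{j-2}+\nu_jy_{j-1}$, $z_j=z_{j-2}+\nu_jz_{j-1}$ for $1\le j\le\alpha$. Let $\theta=\pi/p_0$, let $N$ be an even positive integer, $u\in\mathbb{C}$, $m\in\{0,1,\dots,N/2\}$, and let $\omega_1,\dots,\omega_m$ solve the Bethe ansatz equations $$-\Biggl(\frac{\sinh\frac{\theta}{2}\bigl(\omega_j+i(u+2)\bigr)\sinh\frac{\theta}{2}(\omega_j-iu)}{\sinh\frac{\theta}{2}\bigl(\omega_j-i(u+2)\bigr)\sinh\frac{\theta}{2}(\omega_j+iu)}\Biggr)^{N/2}=\frac{Q(\omega_j+2i)}{Q(\omega_j-2i)},\qquad j=1,\dots,m,$$ where $Q(v)=\prod_{k=1}^m\sinh\frac{\theta}{2}(v-\omega_k)$. For integers $n\ge0$ let $$T_{n-1}(v)=\sum_{j=1}^{n}\phi\bigl(v-i(u+n+2-2j)\bigr)\phi\bigl(v+i(u-n+2j)\bigr)\frac{Q(v+in)Q(v-in)}{Q\bigl(v+i(2j-n)\bigr)Q\bigl(v+i(2j-n-2)\bigr)},\quad \phi(v)=\Bigl(\frac{\sinh\frac{\theta}{2}v}{\sin\theta}\Bigr)^{N/2}.$$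 Then, as an identity of meromorphic functions of $v$, $$T_{y_\alpha+y_{\alpha-1}-1}(v)=T_{y_\alpha-y_{\alpha-1}-1}(v)+2(-1)^{mz_\alpha}\,T_{y_{\alpha-1}-1}(v+iy_\alpha).$$
   Context: $T_{n-1}(v)$ are the eigenvalues (dressed vacuum form) of the fusion hierarchy of quantum transfer matrices of the six-vertex model related to the XXZ chain with $\Delta=\cos(\pi/p_0)$; $\sinh$ is the hyperbolic sine. The numbers $y_j,z_j$ are the Takahashi–Suzuki data attached to $p_0$. *)

From Stdlib Require Import Reals ZArith.
From Coquelicot Require Import Coquelicot.
Open Scope R_scope.
Open Scope C_scope.

Definition Cexp (z : C) : C :=
  ((exp (Re z) * cos (Im z))%R, (exp (Re z) * sin (Im z))%R).
Definition Csinh (z : C) : C := (Cexp z - Cexp (- z)) / 2.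

Fixpoint Cpown (z : C) (n : nat) : C :=
  match n with O => 1 | S k => z * Cpown z k end.

Fixpoint Csum1 (n : nat) (f : nat -> C) : C :=
  match n with O => 0 | S k => Csum1 k f + f (S k) end.

Fixpoint Cprod1 (n : nat) (f : nat -> C) : C :=
  match n with O => 1 | S k => Cprod1 k f * f (S k) end.

Fixpoint cf_from (nu : nat -> nat) (k fuel : nat) : R :=
  match fuel with
  | O => INR (nu k)
  | S f => INR (nu k) + / cf_from nu (S k) f
  end.
Definition cf_value (nu : nat -> nat) (alpha : nat) : R := cf_from nu 1 (alpha - 1).

(* pair (x_{j-1}, x_j) for x_{-1} = a, x_0 = b, x_j = x_{j-2} + nu_j x_{j-1} *)
Fixpoint ts_pair (nu : nat -> nat) (a b : nat) (j : nat) : nat * nat :=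
  match j with
  | O => (a, b)
  | S k => let (p, q) := ts_pair nu a b k in (q, (p + nu (S k) * q)%nat)
  end.
(* Takahashi--Suzuki numbers: y_j, z_j (valid for j >= -1 via y_{j-1} = fst) *)
Definition ts_y (nu : nat -> nat) (j : nat) : nat := snd (ts_pair nu 0 1 j).
Definition ts_z (nu : nat -> nat) (j : nat) : nat := snd (ts_pair nu 1 0 j).
Definition ts_y_prev (nu : nat -> nat) (j : nat) : nat := fst (ts_pair nu 0 1 j).

Definition Qfun (theta : R) (m : nat) (omega : nat -> C) (v : C) : C :=
  Cprod1 m (fun k => Csinh ((theta / 2)%R * (v - omega k))).

Definition phifun (theta : R) (N : nat) (v : C) : C :=
  Cpown (Csinh ((theta / 2)%R * v) / sin theta) (N / 2)%nat.

(* Tm1 n v = T_{n-1}(v) *)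
Definition Tm1 (theta : R) (N : nat) (u : C) (m : nat) (omega : nat -> C)
    (n : nat) (v : C) : C :=
  let Q := Qfun theta m omega in
  let nR := INR n in
  Csum1 n (fun j =>
    let jR := INR j in
    phifun theta N (v - Ci * (u + nR + 2 - 2 * jR))
    * phifun theta N (v + Ci * (u - nR + 2 * jR))
    * (Q (v + Ci * nR) * Q (v - Ci * nR))
    / (Q (v + Ci * (2 * jR - nR)) * Q (v + Ci * (2 * jR - nR - 2)))).

Definition BAE (theta : R) (N : nat) (u : C) (m : nat) (omega : nat -> C) : Prop :=
  forall j : nat, (1 <= j <= m)%nat ->
    - Cpown ((Csinh ((theta / 2)%R * (omega j + Ci * (u + 2)))
             * Csinh ((theta / 2)%R * (omega j - Ci * u)))
            / (Csinh ((theta / 2)%R * (omega j - Ci * (u + 2)))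
               * Csinh ((theta / 2)%R * (omega j + Ci * u)))) (N / 2)%nat
    = Qfun theta m omega (omega j + 2 * Ci) / Qfun theta m omega (omega j - 2 * Ci).

From Stdlib Require Import Reals ZArith Arith Lia.
From Coquelicot Require Import Coquelicot.
Open Scope R_scope.
Open Scope C_scope.

(* Since p0 = y_alpha / z_alpha, shifting v by 2i y_alpha shifts the argument
   theta/2 v of sinh by i pi z_alpha, so phi and Q are quasi-periodic with
   period 2i y_alpha and multipliers of square 1.  Write T_{n-1}(v) as
   Q(v+in) Q(v-in) times a sum over the points x = -n+2j; for n = y + y' with
   y = y_alpha, y' = y_{alpha-1}, the sum splits into blocks of lengths y',
   y - y', y'.  The middle block is the sum of T_{y-y'-1}(v), the last one that
   of T_{y'-1}(v+iy), and the first one is the last one translated by the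
   period. *)

Lemma Csum1_ext n f g : (forall j, f j = g j) -> Csum1 n f = Csum1 n g.
Proof. intros H; induction n; simpl; [reflexivity | rewrite IHn, H; reflexivity]. Qed.

Lemma Csum1_mult_l n K f : Csum1 n (fun j => K * f j) = K * Csum1 n f.
Proof. induction n; simpl; [ring | rewrite IHn; ring]. Qed.

Lemma Csum1_split a b f :
  Csum1 (a + b) f = Csum1 a f + Csum1 b (fun j => f (a + j)%nat).
Proof.
  induction b; simpl.
  - rewrite Nat.add_0_r; ring.
  - rewrite Nat.add_succ_r; simpl; rewrite IHb; ring.
Qed.

Lemma Cprod1_ext n f g : (forall j, f j = g j) -> Cprod1 n f = Cprod1 n g.
Proof. intros H; induction n; simpl; [reflexivity | rewrite IHn, H; reflexivity]. Qed.

Lemma Cprod1_mult_l n c f : Cprod1 n (fun k => c * f k) = Cpown c n * Cprod1 n f.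
Proof. induction n; simpl; [ring | rewrite IHn; ring]. Qed.

Lemma Cpown_mult_distr a b k : Cpown (a * b) k = Cpown a k * Cpown b k.
Proof. induction k; simpl; [ring | rewrite IHk; ring]. Qed.

Lemma Cpown_add a p q : Cpown a (p + q) = Cpown a p * Cpown a q.
Proof. induction p; simpl; [ring | rewrite IHp; ring]. Qed.

Lemma Cpown_Cpown a m z : Cpown (Cpown a z) m = Cpown a (m * z).
Proof. induction m; simpl; [reflexivity | rewrite IHm, Cpown_add; reflexivity]. Qed.

Lemma Cpown_m1_square n : Cpown (-1) n * Cpown (-1) n = 1.
Proof.
  induction n; simpl; [ring |].
  transitivity ((-1 * -1) * (Cpown (-1) n * Cpown (-1) n)); [ring | rewrite IHn; ring].
Qed.

Lemma Cexp_add_iPI w : Cexp (w + Ci * PI) = - Cexp w.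
Proof.
  assert (HRe : Re (w + Ci * PI) = Re w) by (destruct w; simpl; ring).
  assert (HIm : Im (w + Ci * PI) = (Im w + PI)%R) by (destruct w; simpl; ring).
  unfold Cexp. rewrite HRe, HIm, neg_cos, neg_sin. unfold Copp. simpl. f_equal; ring.
Qed.

Lemma Cexp_sub_iPI w : Cexp (w - Ci * PI) = - Cexp w.
Proof.
  pose proof (Cexp_add_iPI (w - Ci * PI)) as H.
  replace (w - Ci * PI + Ci * PI) with w in H by ring.
  rewrite H. ring.
Qed.

Lemma Csinh_sub_iPI w : Csinh (w - Ci * PI) = - Csinh w.
Proof.
  unfold Csinh. replace (- (w - Ci * PI)) with (- w + Ci * PI) by ring.
  rewrite Cexp_sub_iPI, Cexp_add_iPI. unfold Cdiv. ring.
Qed.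

Lemma Csinh_sub_iPI_mult (z : nat) w :
  Csinh (w - Ci * (PI * INR z)) = Cpown (-1) z * Csinh w.
Proof.
  induction z as [| z IHz].
  - simpl. replace (w - Ci * (PI * 0)) with w by ring. ring.
  - rewrite S_INR, RtoC_plus.
    replace (w - Ci * (PI * (INR z + 1))) with (w - Ci * (PI * INR z) - Ci * PI) by ring.
    rewrite Csinh_sub_iPI, IHz. simpl. ring.
Qed.

Lemma phifun_quasi_periodic theta N P (z : nat) w :
  (theta / 2 * P = PI * INR z)%R ->
  phifun theta N (w - Ci * P) = Cpown (-1) (N / 2 * z) * phifun theta N w.
Proof.
  intros HP. unfold phifun.
  replace (RtoC (theta / 2) * (w - Ci * P))
    with (RtoC (theta / 2) * w - Ci * RtoC (theta / 2 * P)) by (rewrite RtoC_mult; ring).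
  rewrite HP, RtoC_mult, Csinh_sub_iPI_mult, <- Cpown_Cpown, <- Cpown_mult_distr.
  f_equal. unfold Cdiv. ring.
Qed.

Lemma Qfun_quasi_periodic theta m omega P (z : nat) w :
  (theta / 2 * P = PI * INR z)%R ->
  Qfun theta m omega (w - Ci * P) = Cpown (-1) (m * z) * Qfun theta m omega w.
Proof.
  intros HP. unfold Qfun. rewrite <- Cpown_Cpown, <- Cprod1_mult_l.
  apply Cprod1_ext. intro k.
  replace (RtoC (theta / 2) * (w - Ci * P - omega k))
    with (RtoC (theta / 2) * (w - omega k) - Ci * RtoC (theta / 2 * P))
    by (rewrite RtoC_mult; ring).
  rewrite HP, RtoC_mult, Csinh_sub_iPI_mult. reflexivity.
Qed.

Lemma ts_pair_S nu a b j : ts_pair nu a b (S j) =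
  (snd (ts_pair nu a b j), (fst (ts_pair nu a b j) + nu (S j) * snd (ts_pair nu a b j))%nat).
Proof. simpl. destruct (ts_pair nu a b j); reflexivity. Qed.

Lemma ts_pair_shift nu a b j :
  ts_pair nu a b (S j) = ts_pair (fun i => nu (S i)) b (a + nu 1%nat * b)%nat j.
Proof.
  induction j.
  - reflexivity.
  - rewrite ts_pair_S, IHj, (ts_pair_S (fun i => nu (S i))). reflexivity.
Qed.

Lemma ts_pair_linear nu a b j : ts_pair nu a b j =
  ((a * fst (ts_pair nu 1 0 j) + b * fst (ts_pair nu 0 1 j))%nat,
   (a * snd (ts_pair nu 1 0 j) + b * snd (ts_pair nu 0 1 j))%nat).
Proof.
  induction j.
  - simpl. f_equal; ring.
  - rewrite !ts_pair_S, IHj. simpl. f_equal; ring.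
Qed.

Lemma ts_y_prev_le nu j : (forall i, (1 <= i <= j)%nat -> (1 <= nu i)%nat) ->
  (ts_y_prev nu j <= ts_y nu j)%nat.
Proof.
  intros H. unfold ts_y_prev, ts_y. destruct j.
  - simpl. lia.
  - rewrite ts_pair_S. cbn [fst snd]. specialize (H (S j) ltac:(lia)). nia.
Qed.

Lemma cf_from_ext f g k n : (forall i, f i = g i) -> cf_from f k n = cf_from g k n.
Proof.
  intros H. revert k; induction n; intro k; simpl; rewrite H; [| rewrite IHn]; reflexivity.
Qed.

Lemma cf_from_shift n : forall nu k,
  cf_from nu (S k) n = cf_from (fun i => nu (i + k)%nat) 1 n.
Proof.
  induction n; intros nu k.
  - reflexivity.
  - simpl. rewrite (IHn nu (S k)), (IHn (fun i => nu (i + k)%nat) 1%nat).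
    do 2 f_equal. apply cf_from_ext. intro i. f_equal. lia.
Qed.

(* Induction from the front: p0 = nu_1 + 1/p0', where the data (y', z') of
   the tail expansion p0' give y = z' + nu_1 y' and z = y'. *)
Lemma cf_from_ts_ratio n : forall nu, (forall i, (1 <= i <= S n)%nat -> (1 <= nu i)%nat) ->
  (0 < ts_y nu (S n))%nat /\ (0 < ts_z nu (S n))%nat /\
  cf_from nu 1 n = (INR (ts_y nu (S n)) / INR (ts_z nu (S n)))%R.
Proof.
  induction n; intros nu Hnu; specialize (Hnu 1%nat ltac:(lia)) as Hnu1.
  - unfold ts_y, ts_z. simpl. rewrite Nat.mul_1_r, Nat.mul_0_r. simpl.
    split; [lia | split; [lia | field]].
  - set (tail := fun i => nu (S i)).
    destruct (IHn tail) as [Hy [Hz Hcf]].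
    { intros i Hi. apply Hnu. lia. }
    assert (Ey : ts_y nu (S (S n)) = (ts_z tail (S n) + nu 1%nat * ts_y tail (S n))%nat).
    { unfold ts_y, ts_z. rewrite ts_pair_shift, ts_pair_linear. cbn [fst snd]. unfold tail. ring. }
    assert (Ez : ts_z nu (S (S n)) = ts_y tail (S n)).
    { unfold ts_y, ts_z. rewrite ts_pair_shift, ts_pair_linear. cbn [fst snd]. unfold tail. ring. }
    rewrite Ey, Ez. split; [nia | split; [lia |]].
    simpl cf_from. rewrite cf_from_shift, (cf_from_ext _ tail 1 n) by (intro i; unfold tail; f_equal; lia).
    rewrite Hcf, plus_INR, mult_INR.
    apply lt_0_INR in Hy. apply lt_0_INR in Hz.
    field. split; apply Rgt_not_eq; assumption.
Qed.

Section FusionHierarchy.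

Variables (Phi Qf : C -> C) (u : C).

(* [Tm1 theta N u m omega] is [Tgen (phifun theta N) (Qfun theta m omega) u]
   by conversion. *)
Definition Tgen (n : nat) (v : C) : C :=
  let nR := INR n in
  Csum1 n (fun j =>
    let jR := INR j in
    Phi (v - Ci * (u + nR + 2 - 2 * jR))
    * Phi (v + Ci * (u - nR + 2 * jR))
    * (Qf (v + Ci * nR) * Qf (v - Ci * nR))
    / (Qf (v + Ci * (2 * jR - nR)) * Qf (v + Ci * (2 * jR - nR - 2)))).

Definition Tterm (v x : C) : C :=
  Phi (v - Ci * (u - x + 2)) * Phi (v + Ci * (u + x))
  / (Qf (v + Ci * x) * Qf (v + Ci * (x - 2))).

Definition Tblock (v a : C) (c : nat) : C :=
  Csum1 c (fun j => Tterm v (a + 2 * INR j)).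

Lemma Tgen_Tblock n v :
  Tgen n v = Qf (v + Ci * INR n) * Qf (v - Ci * INR n) * Tblock v (- INR n) n.
Proof.
  unfold Tgen, Tblock. rewrite <- Csum1_mult_l. apply Csum1_ext; intro j. unfold Tterm.
  set (nR := RtoC (INR n)). set (jR := RtoC (INR j)).
  replace (v - Ci * (u - (- nR + 2 * jR) + 2)) with (v - Ci * (u + nR + 2 - 2 * jR)) by ring.
  replace (v + Ci * (u + (- nR + 2 * jR))) with (v + Ci * (u - nR + 2 * jR)) by ring.
  replace (v + Ci * (- nR + 2 * jR)) with (v + Ci * (2 * jR - nR)) by ring.
  replace (v + Ci * (- nR + 2 * jR - 2)) with (v + Ci * (2 * jR - nR - 2)) by ring.
  unfold Cdiv; ring.
Qed.

Lemma Tblock_split v a c1 c2 :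
  Tblock v a (c1 + c2) = Tblock v a c1 + Tblock v (a + 2 * INR c1) c2.
Proof.
  unfold Tblock. rewrite Csum1_split. f_equal. apply Csum1_ext; intro j.
  rewrite plus_INR, RtoC_plus. f_equal. ring.
Qed.

Lemma Tterm_shift v Y x : Tterm (v + Ci * Y) x = Tterm v (x + Y).
Proof.
  unfold Tterm.
  replace (v + Ci * Y - Ci * (u - x + 2)) with (v - Ci * (u - (x + Y) + 2)) by ring.
  replace (v + Ci * Y + Ci * (u + x)) with (v + Ci * (u + (x + Y))) by ring.
  replace (v + Ci * Y + Ci * x) with (v + Ci * (x + Y)) by ring.
  replace (v + Ci * Y + Ci * (x - 2)) with (v + Ci * (x + Y - 2)) by ring.
  reflexivity.
Qed.

Lemma Tblock_shift v Y a c : Tblock (v + Ci * Y) a c = Tblock v (a + Y) c.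
Proof.
  unfold Tblock. apply Csum1_ext; intro j.
  rewrite Tterm_shift. f_equal. ring.
Qed.

Variables (P s t : C).
Hypotheses (Hs : s * s = 1) (Ht : t * t = 1).
Hypothesis HPhi : forall w, Phi (w - Ci * P) = t * Phi w.
Hypothesis HQf : forall w, Qf (w - Ci * P) = s * Qf w.

Lemma Tterm_periodic v x : Tterm v (x - P) = Tterm v x.
Proof.
  unfold Tterm.
  replace (v - Ci * (u - (x - P) + 2)) with (v - Ci * (u - x + 2) - Ci * P) by ring.
  replace (v + Ci * (u + (x - P))) with (v + Ci * (u + x) - Ci * P) by ring.
  replace (v + Ci * (x - P)) with (v + Ci * x - Ci * P) by ring.
  replace (v + Ci * (x - P - 2)) with (v + Ci * (x - 2) - Ci * P) by ring.
  rewrite !HPhi, !HQf.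
  set (A := Phi (v - Ci * (u - x + 2))). set (B := Phi (v + Ci * (u + x))).
  set (D := Qf (v + Ci * x)). set (E := Qf (v + Ci * (x - 2))).
  replace (t * A * (t * B)) with (A * B) by (rewrite <- (Cmult_1_l (A * B)), <- Ht; ring).
  replace (s * D * (s * E)) with (D * E) by (rewrite <- (Cmult_1_l (D * E)), <- Hs; ring).
  reflexivity.
Qed.

Lemma Tblock_periodic v a c : Tblock v (a - P) c = Tblock v a c.
Proof.
  unfold Tblock. apply Csum1_ext; intro j.
  rewrite <- (Tterm_periodic v (a + 2 * INR j)). f_equal. ring.
Qed.

Lemma Tgen_quasi_periodic_relation (y y' : nat) v :
  P = 2 * INR y -> (y' <= y)%nat ->
  Tgen (y + y') v = Tgen (y - y') v + 2 * s * Tgen y' (v + Ci * INR y).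
Proof.
  intros HP Hle.
  rewrite !Tgen_Tblock, Tblock_shift, plus_INR, (minus_INR _ _ Hle).
  replace (y + y')%nat with (y' + (y - y') + y')%nat by lia.
  rewrite !Tblock_split.
  rewrite !plus_INR, !(minus_INR _ _ Hle), !RtoC_plus, !RtoC_minus.
  set (Y := RtoC (INR y)) in *. set (Y' := RtoC (INR y')).
  assert (Hfirst : Tblock v (- (Y + Y')) y' = Tblock v (- Y' + Y) y').
  { rewrite <- (Tblock_periodic v (- Y' + Y) y'). f_equal. rewrite HP. ring. }
  assert (Hlast : - (Y + Y') + 2 * (Y' + (Y - Y')) = - Y' + Y) by ring.
  assert (Hmid : - (Y + Y') + 2 * Y' = - (Y - Y')) by ring.
  assert (HQminus : Qf (v - Ci * (Y + Y')) = s * Qf (v + Ci * (Y - Y'))).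
  { rewrite <- HQf. f_equal. rewrite HP. ring. }
  assert (HQplus : Qf (v - Ci * (Y - Y')) = s * Qf (v + Ci * (Y + Y'))).
  { rewrite <- HQf. f_equal. rewrite HP. ring. }
  replace (v + Ci * Y + Ci * Y') with (v + Ci * (Y + Y')) by ring.
  replace (v + Ci * Y - Ci * Y') with (v + Ci * (Y - Y')) by ring.
  rewrite Hfirst, Hlast, Hmid, HQminus, HQplus.
  ring.
Qed.

End FusionHierarchy.

Theorem mainTheorem2
  (alpha : nat) (nu : nat -> nat) (p0 : R)
  (Halpha : (1 <= alpha)%nat)
  (Hnu : forall j : nat, (1 <= j <= alpha)%nat -> (1 <= nu j)%nat)
  (Hp0 : p0 = cf_value nu alpha)
  (Hp0gt : (2 < p0)%R)
  (N : nat) (HNeven : Nat.Even N) (HNpos : (0 < N)%nat)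
  (u : C) (m : nat) (Hm : (m <= N / 2)%nat) (omega : nat -> C)
  (HBAE : BAE (PI / p0)%R N u m omega)
  (v : C)
  (Hv : forall k : Z, Qfun (PI / p0)%R m omega (v + Ci * IZR k) <> 0) :
  let theta := (PI / p0)%R in
  let ya := ts_y nu alpha in
  let ya1 := ts_y_prev nu alpha in
  let za := ts_z nu alpha in
  Tm1 theta N u m omega (ya + ya1)%nat v
  = Tm1 theta N u m omega (ya - ya1)%nat v
    + 2 * Cpown (-1) (m * za)%nat
        * Tm1 theta N u m omega ya1 (v + Ci * INR ya).
Proof.
  intros theta ya ya1 za.
  destruct alpha as [| n]; [lia |].
  destruct (cf_from_ts_ratio n nu Hnu) as [Hy [Hz Hratio]].
  assert (Hp0_ratio : p0 = (INR ya / INR za)%R).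
  { rewrite Hp0. unfold cf_value. replace (S n - 1)%nat with n by lia. exact Hratio. }
  assert (Hperiod : (theta / 2 * (2 * INR ya) = PI * INR za)%R).
  { apply lt_0_INR in Hy. apply lt_0_INR in Hz.
    unfold theta. rewrite Hp0_ratio. field. split; apply Rgt_not_eq; assumption. }
  apply (Tgen_quasi_periodic_relation _ _ u (2 * INR ya) _ (Cpown (-1) (N / 2 * za))).
  - apply Cpown_m1_square.
  - apply Cpown_m1_square.
  - intro w. rewrite <- RtoC_mult. exact (phifun_quasi_periodic _ _ _ _ w Hperiod).
  - intro w. rewrite <- RtoC_mult. exact (Qfun_quasi_periodic _ _ _ _ _ w Hperiod).
  - reflexivity.
  - apply ts_y_prev_le. exact Hnu.
Qed.
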